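(* $\mathcal{TC}(\mathrm{RL}_1^P)=\mathrm{FIN}$, the family of all finite languages.
   Context: A right-linear grammar is $G=(N,T,P,S)$ with rules $A\to wB$ or $A\to w$ ($A,B\in N$, $w\in T^*$). For a regular language $L$, $\mathrm{Prod}_{RL}(L)$ is the minimum of $|P|$ over all right-linear grammars generating $L$, and $\mathrm{RL}_n^P=\{L\text{ regular}:\mathrm{Prod}_{RL}(L)\le n\}$. A tree-controlled grammar is a quintuple $G=(N,T,P,S,R)$ where $(N,T,P,S)$ is a context-free grammar whose rules are all non-erasing, except that $S\to\lambda$ is allowed if $S$ does not occur on the right-hand side of any rule, and $R\subseteq (N\cup T)^*$ is a regular control language. The word of level $j$ of a derivation tree is the word of all nodes of depth $j$ read left to right. $L(G)$ consists of all $z\in T^*$ having a derivation tree with yield $z$ such that the words of all levels except the last belong to $R$. For a family $\mathcal F$ of regular languages, $\mathcal{TC}(\mathcal F)$ is the family of languages generated by tree-controlled grammars with control language in $\mathcal F$. *)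

From mathcomp Require Import all_boot.
Set Implicit Arguments. Unset Strict Implicit. Unset Printing Implicit Defensive.

Definition language (X : Type) := seq X -> Prop.

Definition finite_lang (X : eqType) (L : language X) : Prop :=
  exists s : seq (seq X), forall z, L z <-> z \in s.

(** * Right-linear grammars  G = (N, T, P, S)
    a rule  A -> w B  is  (A, (w, Some B));  a rule  A -> w  is  (A, (w, None)).
    P is a finite set of rules, represented by a list; |P| = size (undup P). *)
Record rlgrammar (N X : finType) := RLGrammar {
  rl_start : N;
  rl_rules : seq (N * (seq X * option N)) }.

Inductive rl_derives (N X : finType) (G : rlgrammar N X) : N -> seq X -> Prop :=
  | rl_term A w : (A, (w, None)) \in rl_rules G -> rl_derives G A w
  | rl_step A B w v : (A, (w, Some B)) \in rl_rules G ->
      rl_derives G B v -> rl_derives G A (w ++ v).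

Definition rl_lang (N X : finType) (G : rlgrammar N X) : language X :=
  fun z => rl_derives G (rl_start G) z.

(** L \in RL_n^P  iff  Prod_RL(L) <= n  iff  some right-linear grammar with at
    most n productions generates L (such an L is automatically regular). *)
Definition RL_P (n : nat) (X : finType) (L : language X) : Prop :=
  exists (N : finType) (G : rlgrammar N X),
    size (undup (rl_rules G)) <= n /\ forall z, L z <-> rl_lang G z.

(** * Tree-controlled grammars  G = (N, T, P, S, R)
    Symbols are N + T (disjoint union); a rule A -> alpha is (A, alpha). *)
Record cfgrammar (N T : finType) := CFGrammar {
  cf_start : N;
  cf_rules : seq (N * seq (N + T)) }.

Definition cf_nonerasing (N T : finType) (G : cfgrammar N T) : Prop :=
  forall A alpha, (A, alpha) \in cf_rules G -> alpha = [::] ->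
    A = cf_start G /\
    forall B beta, (B, beta) \in cf_rules G -> inl (cf_start G) \notin beta.

Inductive dtree (N T : Type) :=
  | DLeaf of T
  | DLam
  | DNode of N & seq (dtree N T).

Arguments DLam {N T}.

Definition dlabel (N T : Type) (t : dtree N T) : seq (N + T) :=
  match t with
  | DLeaf a => [:: inr a]
  | DLam => [::]
  | DNode A _ => [:: inl A]
  end.

Definition droot_sym (N T : Type) (t : dtree N T) : option (N + T) :=
  match t with
  | DLeaf a => Some (inr a)
  | DLam => None
  | DNode A _ => Some (inl A)
  end.

(** every inner node uses a rule of G: either A -> X1...Xk (k>0, children
    labelled X1..Xk), or A -> lambda (single child labelled lambda). *)
Fixpoint dvalid (N T : finType) (G : cfgrammar N T) (t : dtree N T) : bool :=
  match t with
  | DLeaf _ => true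
  | DLam => true
  | DNode A ts =>
      (if ts is [:: DLam] then (A, [::]) \in cf_rules G
       else [&& ~~ nilp ts, all (fun u => isSome (droot_sym u)) ts &
                (A, pmap (@droot_sym N T) ts) \in cf_rules G])
      && all (dvalid G) ts
  end.

Fixpoint dyield (N T : Type) (t : dtree N T) : seq T :=
  match t with
  | DLeaf a => [:: a]
  | DLam => [::]
  | DNode _ ts => flatten (map (@dyield N T) ts)
  end.

(** depth of the tree (= index of the last level) *)
Fixpoint dheight (N T : Type) (t : dtree N T) : nat :=
  match t with
  | DNode _ ts => (\max_(u <- map (@dheight N T) ts) u).+1
  | _ => 0
  end.

Fixpoint dlevel (N T : Type) (j : nat) (t : dtree N T) : seq (N + T) :=
  match j with
  | 0 => dlabel t
  | j'.+1 => match t with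
             | DNode _ ts => flatten (map (dlevel j') ts)
             | _ => [::]
             end
  end.

Definition tc_lang (N T : finType) (G : cfgrammar N T)
    (R : language (N + T)) : language T :=
  fun z => exists t : dtree N T,
    [/\ droot_sym t = Some (inl (cf_start G)), dvalid G t, dyield t = z &
        forall j, j < dheight t -> R (dlevel j t)].

Definition in_TC (F : forall X : finType, language X -> Prop)
    (T : finType) (L : language T) : Prop :=
  exists (N : finType) (G : cfgrammar N T) (R : language (N + T)),
    [/\ cf_nonerasing G, F _ R & forall z, L z <-> tc_lang G R z].

From mathcomp Require Import all_boot.
From Stdlib Require Import ClassicalDescription.

Set Implicit Arguments. Unset Strict Implicit. Unset Printing Implicit Defensive.

(** A right-linear grammar with a single production generates at most one
    word, so the control language R of a tree-controlled grammar in
    TC(RL_1^P) contains at most one word.  Level 0 of every derivation tree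
    is the start symbol S and lies in R, hence every controlled level equals
    the one-letter word S.  A valid derivation tree all of whose non-last
    levels are S is a chain of S-nodes ending in one terminal rule S -> z
    (lemma [uniform_tree_rule]); so L(G) is contained in the finite set of
    terminal right-hand sides of S, and is finite.
    Conversely, a finite language {z_1, ..., z_k} is generated by the rules
    S -> z_i controlled by R = {S}, which the one-rule right-linear grammar
    with the terminating rule S' -> S generates; the derivation of z_i is
    the tree [flat_tree S z_i] of height 1 (lemma [tc_lang_of_rule]). *)

Lemma finite_lang_sub (X : eqType) (L : language X) (s : seq (seq X)) :
  (forall z, L z -> z \in s) -> finite_lang L.
Proof.
move=> Ls.
pose inL z := if excluded_middle_informative (L z) then true else false.
exists [seq z <- s | inL z] => z; rewrite mem_filter /inL.
case: excluded_middle_informative => [Lz|nLz] /=; last by split.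
by split => [_|//]; apply: Ls.
Qed.

Lemma undup_le1_eq (X : eqType) (s : seq X) x y :
  size (undup s) <= 1 -> x \in s -> y \in s -> x = y.
Proof.
rewrite -(mem_undup s) -[y \in s](mem_undup s).
by case: (undup s) => [|a [|b l]] //= _; rewrite !inE => /eqP -> /eqP ->.
Qed.

Lemma rl_derives_functional (N X : finType) (G : rlgrammar N X) :
  (forall r r', r \in rl_rules G -> r' \in rl_rules G -> r = r') ->
  forall A z, rl_derives G A z -> forall B z', rl_derives G B z' -> z = z'.
Proof.
move=> same_rule A z Hz; elim: Hz => [A0 w r|A0 C w v r _ IH] B z' Hz';
  case: Hz' => [B0 w' r'|B0 D w' v' r' Hv']; case: (same_rule _ _ r r') => //.
by move=> _ <- eCD; rewrite (IH _ _ Hv').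
Qed.

Lemma RL_P1_at_most_one (X : finType) (R : language X) :
  RL_P 1 R -> forall w w', R w -> R w' -> w = w'.
Proof.
case=> N [G [one_rule RG]] w w' /RG Hw /RG Hw'.
apply: (rl_derives_functional _ Hw Hw') => r r'; exact: undup_le1_eq.
Qed.

Lemma RL_P1_singleton (X : finType) (w : seq X) : RL_P 1 (fun u => u = w).
Proof.
exists unit, (RLGrammar tt [:: (tt, (w, None))]); split => // z; split.
- by move=> ->; apply: rl_term; rewrite inE.
- by case=> [A u|A B u v]; rewrite inE => /eqP [].
Qed.

Lemma dlevel1_roots (N T : Type) (A : N) (ts : seq (dtree N T)) :
  dlevel 1 (DNode A ts) = pmap (@droot_sym N T) ts.
Proof. by rewrite /=; elim: ts => [|[a| |B us] ts /= ->]. Qed.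

(** Labelled children of height 0 are terminal leaves, so the right-hand side
    they spell is their yield. *)
Lemma leaf_children_rhs (N T : Type) (ts : seq (dtree N T)) :
  all (fun u => isSome (droot_sym u)) ts ->
  \max_(h <- map (@dheight N T) ts) h = 0 ->
  pmap (@droot_sym N T) ts = map inr (flatten (map (@dyield N T) ts)).
Proof.
elim: ts => [|[a| |B us] ts IH] //=; rewrite big_cons.
- by rewrite max0n => all_some /(IH all_some) ->.
- by move=> _ /eqP; rewrite -leqn0 geq_max.
Qed.

Lemma dvalid_nodeP (N T : finType) (G : cfgrammar N T) A ts :
  dvalid G (DNode A ts) ->
  (ts = [:: DLam] /\ (A, [::]) \in cf_rules G) \/
  [/\ all (fun u => isSome (droot_sym u)) ts,
      (A, pmap (@droot_sym N T) ts) \in cf_rules G & all (dvalid G) ts].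
Proof.
case/andP; case: ts => [|[a| |B us] [|v r]] rule valid_ts; try by left.
all: by right; case/and3P: rule.
Qed.

Lemma uniform_tree_rule (N T : finType) (G : cfgrammar N T) n :
  forall (t : dtree N T) A,
  dheight t <= n -> droot_sym t = Some (inl A) -> dvalid G t ->
  (forall j, j < dheight t -> dlevel j t = [:: inl A]) ->
  (A, map inr (dyield t)) \in cf_rules G.
Proof.
elim: n => [|n IH] [a| |B ts] A //= height_le [<-{A}] valid levels.
case: (dvalid_nodeP valid) => [[-> //] | [all_some rule valid_ts]].
have [height1|height2] := leqP (dheight (DNode B ts)) 1.
  by rewrite -leaf_children_rhs //; apply/eqP; rewrite -leqn0.
have level1 := levels 1 height2; rewrite dlevel1_roots in level1.
have size1 : size ts = 1.
  by move: all_some; rewrite all_count -size_pmap level1 => /eqP <-.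
case: ts size1 height_le valid_ts levels level1 {all_some rule height2 valid} =>
  [|u [|v r]] // _; rewrite /= big_cons big_nil maxn0 cats0 andbT => height_le.
case root_u: (droot_sym u) => [x|] // valid_u levels [ex]; subst x.
apply: IH => // j lt_j; rewrite -[RHS](levels j.+1) //= cats0 //.
Qed.

Definition flat_tree {N T : Type} (A : N) (z : seq T) : dtree N T :=
  DNode A (if z is [::] then [:: DLam] else map (@DLeaf N T) z).

Lemma flat_tree_valid (N T : finType) (G : cfgrammar N T) A z :
  dvalid G (flat_tree A z) = ((A, map inr z) \in cf_rules G).
Proof.
case: z => [|a z] /=; first by rewrite andbT.
have -> : all (dvalid G) (map (@DLeaf N T) z) by elim: z.
have -> : all (fun u => isSome (droot_sym u)) (map (@DLeaf N T) z) by elim: z.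
have -> : pmap (@droot_sym N T) (map (@DLeaf N T) z) = map inr z.
  by elim: z => //= b z ->.
by rewrite /= !andbT.
Qed.

Lemma flat_tree_shape (N T : Type) (A : N) (z : seq T) :
  [/\ dyield (flat_tree A z) = z, dheight (flat_tree A z) = 1 &
      dlevel 0 (flat_tree A z) = [:: inl A]].
Proof.
case: z => [|a z]; first by rewrite /= big_cons big_nil.
split=> //=; first by congr (_ :: _); elim: z => //= b z ->.
by rewrite big_cons !big_map big1.
Qed.

Lemma tc_lang_rule (N T : finType) (G : cfgrammar N T) (R : language (N + T)) z :
  (forall w w', R w -> R w' -> w = w') -> tc_lang G R z ->
  (cf_start G, map inr z) \in cf_rules G.
Proof.
move=> R_one [t [root valid <- controlled]].
have [height_pos level0] : 0 < dheight t /\ dlevel 0 t = [:: inl (cf_start G)].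
  by case: t root {valid controlled} => // ? ? [->].
have R_start : R [:: inl (cf_start G)] by rewrite -level0; apply: controlled.
apply: (uniform_tree_rule (leqnn _) root valid) => j lt_j.
exact: R_one (controlled j lt_j) R_start.
Qed.

Lemma tc_lang_of_rule (N T : finType) (G : cfgrammar N T) (R : language (N + T)) z :
  R [:: inl (cf_start G)] -> (cf_start G, map inr z) \in cf_rules G -> tc_lang G R z.
Proof.
move=> R_start rule; have [yield height level0] := flat_tree_shape (cf_start G) z.
exists (flat_tree (cf_start G) z); split=> //; first by rewrite flat_tree_valid.
by rewrite height => -[|j] // _; rewrite level0.
Qed.

Definition terminal {N T : Type} (x : N + T) : option T :=
  if x is inr a then Some a else None.

Lemma inrK (N T : Type) : pcancel (@inr N T) terminal.
Proof. by []. Qed.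

Theorem mainTheorem5 :
  forall (T : finType) (L : language T),
    in_TC (RL_P 1) L <-> finite_lang L.
Proof.
move=> T L; split.
- case=> N [G [R [_ R_P1 LG]]].
  apply: (@finite_lang_sub _ _ [seq pmap terminal r.2 | r <- cf_rules G]).
  move=> z /LG Lz; apply/mapP; exists (cf_start G, map inr z).
    exact: tc_lang_rule (RL_P1_at_most_one R_P1) Lz.
  by rewrite /= (map_pK (@inrK N T)).
- case=> s Ls.
  pose G := CFGrammar tt [seq (tt, map (@inr unit T) z) | z <- s].
  have rule_mem z : ((tt, map inr z) \in cf_rules G) = (z \in s).
    by rewrite mem_map // => x y [/(inj_map inr_inj)].
  exists unit, G, (fun w => w = [:: inl tt]); split.
  + move=> A alpha /mapP[z _ [-> ->]] _; split=> // B beta /mapP[z' _ [_ ->]].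
    by apply/mapP => -[].
  + exact: RL_P1_singleton.
  + move=> z; rewrite Ls -rule_mem; split; first exact: tc_lang_of_rule.
    by apply: tc_lang_rule => w w' -> ->.
Qed.
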